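(* Let $2\le n<m$ and $Q=\sum_{i\in[m]}q_i\mathrm B(\sigma_i)\in\mathbb B_m^*$ with all $q_i>0$ and $0\le\sigma_1<\cdots<\sigma_m\le1/2$. Let $W=D_Q(i_2,\dots,i_n;s_2,\dots,s_n)$ and $W'=D_Q(i'_2,\dots,i'_n;s'_2,\dots,s'_n)$ be $2n$-P$^*$-degradations of $Q$ such that the number of indices $j\in\{2,\dots,n\}$ with $(i_j,s_j)\neq(i'_j,s'_j)$ is at most two. If $W\preccurlyeq W'$, then $W\cong W'$. (That is, no $2n$-P$^*$-degradation strictly upgrading $W$ can be obtained by changing at most two splitting patterns of $W$.)
   Context: A BIDMC $W$ has input uniform on $\{0,1\}$, discrete output alphabet $\mathcal Y$ and transition probabilities $\Pr(y\mid x)$; its LR-profile is $P_W(\varepsilon)=\Pr\big(\mathcal L_W(y)=\varepsilon/(1-\varepsilon)\big)$ with $\mathcal L_W(\hat y)=\Pr(y=\hat y\mid x=0)/\Pr(y=\hat y\mid x=1)$, and $W\cong W'$ if LR-profiles coincide; channel identities are up to $\cong$. $W'\preccurlyeq W$ if there is a channel $T$ from the output alphabet of $W$ to that of $W'$ with $\Pr(y'\mid x'=a)=\sum_{y}\Pr(y\mid x=a)T(y'\mid y)$. $\mathrm B(\varepsilon)$ is the BSC with crossover probability $\varepsilon$; $\sum_iq_iW_i$ denotes the random switching channel (use $W_i$ with probability $q_i$ independently of the input and output the index $i$ along with the output). $\mathbb B_n$ is the set of BIDMCs equivalent to $\sum_{i\in[n]}p_i\mathrm B(\varepsilon_i)$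 for a probability vector $(p_i)$ and $\varepsilon_i\in[0,1]$; $\mathbb B_n^*=\mathbb B_n\setminus\mathbb B_{n-1}$. $P_\epsilon(W)=\frac12\sum_{y}\min\{\Pr(y\mid x=0),\Pr(y\mid x=1)\}$. For a symmetric BIDMC $Q$ and $n\ge1$, $W$ is a $2n$-P-degradation of $Q$ if $W\in\mathbb B_n$, $W\preccurlyeq Q$ and $P_\epsilon(W)=\min\{P_\epsilon(W'):W'\in\mathbb B_n,\ W'\preccurlyeq Q\}$. Construction of $D_Q$: for $Q$ as in the claim, put $q_0=q_{m+1}=0$. Given integers $1\le i_2<\cdots<i_n\le m$ and reals $s_j\in[0,q_{i_j}]$, set $i_1=0$, $s_1=0$, $i_{n+1}=m+1$, $s_{n+1}=0$, and for $j\in[n]$ $$p_j=s_j+(q_{i_{j+1}}-s_{j+1})+\sum_{i_j<i<i_{j+1}}q_i,\qquad p_j\varepsilon_j=s_j\sigma_{i_j}+(q_{i_{j+1}}-s_{j+1})\sigma_{i_{j+1}}+\sum_{i_j<i<i_{j+1}}q_i\sigma_i$$ (terms with weight $0$ contribute $0$). Then $D_Q(i_2,\dots,i_n;s_2,\dots,s_n)=\sum_{j\in[n]:p_j>0}p_j\mathrm B(\varepsilon_j)$; the pairs $(i_j,s_j)$ are its splitting patterns. Such a channel is a $2n$-P$^*$-degradation of $Q$ if (i) all $p_j>0$ and $0\le\varepsilon_1<\cdots<\varepsilon_n\le1/2$; (ii) it is a $2n$-P-degradation of $Q$; (iii) for every $j\in[n]$ with $i_{j+1}=i_j+1$: if $s_j=0$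 then $s_{j+1}=0$, and if $s_{j+1}=q_{i_{j+1}}$ then $s_j=q_{i_j}$. *)

From HB Require Import structures.
From mathcomp Require Import all_boot all_order all_algebra.
From mathcomp Require Import reals.
Set Implicit Arguments. Unset Strict Implicit. Unset Printing Implicit Defensive.
Import Order.TTheory GRing.Theory Num.Theory.
Local Open Scope ring_scope.

(* A binary-input channel with finite output alphabet [out];
   input 0 is [false], input 1 is [true]; tr x y = Pr(y | x). *)
Record chan (R : realType) := Chan { out : finType; tr : bool -> out -> R }.
Arguments out {R} c.
Arguments tr {R} c _ _.
Arguments Chan {R} out tr.

Section Channels.
Variable R : realType.

Definition valid (W : chan R) : Prop :=
  (forall x y, 0 <= tr W x y) /\ (forall x, \sum_y tr W x y = 1).

(* L_W(y) = W(y|0)/W(y|1) = e/(1-e) is written cross-multiplied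
   (W(y|0)(1-e) = W(y|1) e), which also covers the cases 0 and +oo;
   outputs of probability 0 (where it holds trivially) contribute 0. *)
Definition LRprofile (W : chan R) (e : R) : R :=
  \sum_(y | tr W false y * (1 - e) == tr W true y * e)
     (tr W false y + tr W true y) / 2.

Definition cong (W W' : chan R) : Prop :=
  forall e, 0 <= e <= 1 -> LRprofile W e = LRprofile W' e.

Definition degr (W' W : chan R) : Prop :=
  exists T : out W -> out W' -> R,
    (forall y y', 0 <= T y y') /\ (forall y, \sum_y' T y y' = 1) /\
    (forall a y', tr W' a y' = \sum_y tr W a y * T y y').

Definition Perr (W : chan R) : R :=
  (1 / 2) * \sum_y Num.min (tr W false y) (tr W true y).

Definition bsc (e : R) (x y : bool) : R := if y == x then 1 - e else e.

Definition switch (I : finType) (p eps : I -> R) : chan R :=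
  @Chan R (I * bool)%type (fun x yb => p yb.1 * bsc (eps yb.1) x yb.2).

Definition inB (n : nat) (W : chan R) : Prop :=
  exists p eps : 'I_n -> R,
    (forall i, 0 <= p i) /\ \sum_i p i = 1 /\ (forall i, 0 <= eps i <= 1) /\
    cong W (switch p eps).

Definition inBstar (n : nat) (W : chan R) : Prop := inB n W /\ ~ inB n.-1 W.

Definition isPdeg (n : nat) (Q W : chan R) : Prop :=
  valid W /\ inB n W /\ degr W Q /\
  forall W', valid W' -> inB n W' -> degr W' Q -> Perr W <= Perr W'.

(* Q = sum_{i in [m]} q_i B(sigma_i), with q, sigma : nat -> R indexed 1..m. *)
Definition Qchan (m : nat) (q sigma : nat -> R) : chan R :=
  @switch 'I_m (fun i => q i.+1) (fun i => sigma i.+1).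

(* Extended data of the construction D_Q, with indices j in 1..n+1. *)
Definition qe (m : nat) (q : nat -> R) (i : nat) : R :=
  if (1 <= i <= m)%N then q i else 0.
Definition ie (n m : nat) (ii : nat -> nat) (j : nat) : nat :=
  if j == 1%N then 0%N else if j == n.+1 then m.+1 else ii j.
Definition se (n : nat) (s : nat -> R) (j : nat) : R :=
  if (j == 1%N) || (j == n.+1) then 0 else s j.

Definition DQp (n m : nat) (q : nat -> R) (ii : nat -> nat) (s : nat -> R) (j : nat) : R :=
  se n s j + (qe m q (ie n m ii j.+1) - se n s j.+1)
  + \sum_((ie n m ii j).+1 <= i < ie n m ii j.+1) qe m q i.

Definition DQpe (n m : nat) (q sigma : nat -> R) (ii : nat -> nat) (s : nat -> R)
  (j : nat) : R :=
  se n s j * sigma (ie n m ii j)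
  + (qe m q (ie n m ii j.+1) - se n s j.+1) * sigma (ie n m ii j.+1)
  + \sum_((ie n m ii j).+1 <= i < ie n m ii j.+1) qe m q i * sigma i.

Definition DQeps (n m : nat) (q sigma : nat -> R) (ii : nat -> nat) (s : nat -> R)
  (j : nat) : R :=
  DQpe n m q sigma ii s j / DQp n m q ii s j.

(* D_Q(i_2..i_n; s_2..s_n) = sum_{j in [n], p_j > 0} p_j B(eps_j);
   index j : 'I_n stands for j+1 in [n]. *)
Definition DQ (n m : nat) (q sigma : nat -> R) (ii : nat -> nat) (s : nat -> R)
  : chan R :=
  @switch {j : 'I_n | 0 < DQp n m q ii s j.+1}
    (fun j => DQp n m q ii s (val j).+1)
    (fun j => DQeps n m q sigma ii s (val j).+1).

Definition pattern_ok (n m : nat) (q : nat -> R) (ii : nat -> nat) (s : nat -> R)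
  : Prop :=
  (forall j, (2 <= j <= n)%N -> (1 <= ii j <= m)%N) /\
  (forall j, (2 <= j < n)%N -> (ii j < ii j.+1)%N) /\
  (forall j, (2 <= j <= n)%N -> 0 <= s j <= q (ii j)).

Definition isPstar (n m : nat) (q sigma : nat -> R) (ii : nat -> nat) (s : nat -> R)
  : Prop :=
  ((forall j, (1 <= j <= n)%N -> 0 < DQp n m q ii s j) /\
   0 <= DQeps n m q sigma ii s 1 /\
   (forall j, (1 <= j < n)%N ->
      DQeps n m q sigma ii s j < DQeps n m q sigma ii s j.+1) /\
   DQeps n m q sigma ii s n <= 1 / 2) /\
  isPdeg n (Qchan m q sigma) (DQ n m q sigma ii s) /\
  (forall j, (1 <= j <= n)%N -> ie n m ii j.+1 = (ie n m ii j).+1 ->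
     (se n s j = 0 -> se n s j.+1 = 0) /\
     (se n s j.+1 = qe m q (ie n m ii j.+1) -> se n s j = qe m q (ie n m ii j))).

End Channels.

(* A degradation can only increase the Bayes risk
   t |-> sum_y min ((1 - t) W(y|1), t W(y|0)).  For D_Q with breakpoints
   0 = bp_1 < ... < bp_{n+1} = 1 this risk is sum_j min (p_j eps_j, t p_j), where
   p_j = bp_{j+1} - bp_j and p_j eps_j is the increment over [bp_j, bp_{j+1}] of
   the convex piecewise-linear curve with slope sigma_a on the a-th atom of Q.
   Comparing the risks of W and W' at t = eps'_j shows that a breakpoint of W lies
   strictly inside the j-th interval of W' only if that interval is an atom of Q,
   and condition (iii) forbids W to split an atom.  Hence, from the first index
   where the breakpoints of W and W' differ, they differ at the next two indices
   as well, so three consecutive splitting patterns would change.  Equal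
   breakpoints give equal channels. *)

From HB Require Import structures.
From mathcomp Require Import all_boot all_order all_algebra.
From mathcomp Require Import reals.
From mathcomp Require Import ring lra zify.
Import Order.TTheory GRing.Theory Num.Theory.
Local Open Scope ring_scope.
Set Implicit Arguments. Unset Strict Implicit. Unset Printing Implicit Defensive.

Lemma le_of_lt_steps (R : numDomainType) (f : nat -> R) (a b : nat) :
  (forall i, (a <= i < b)%N -> f i < f i.+1) ->
  forall i j, (a <= i)%N -> (i <= j <= b)%N -> f i <= f j.
Proof.
move=> step i j ai /andP [ij jb]; elim: j ij jb => [|j IH]; first by rewrite leqn0 => /eqP ->.
rewrite leq_eqVlt => /orP [/eqP -> // | ij] jb.
by apply: le_trans (IH ij (ltnW jb)) (ltW (step j _)); rewrite jb (leq_trans ai ij).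
Qed.

Lemma big_nat_prefix_split (V : nmodType) (f : nat -> V) a b : (a < b)%N ->
  \sum_(0 <= l < b.+1) f l = \sum_(0 <= l < a.+1) f l + \sum_(a.+1 <= l < b) f l + f b.
Proof. by move=> ab; rewrite big_nat_recr //= (big_cat_nat (n := a.+1)) // ltnW. Qed.

Lemma count_iota_no_three (P : pred nat) a b k : (count P (iota a b) <= 2)%N ->
  (a <= k)%N -> (k.+3 <= a + b)%N -> P k -> P k.+1 -> P k.+2 -> False.
Proof.
move=> few ak kb Pk Pk1 Pk2.
have b_eq : b = ((k - a) + (3 + (a + b - k.+3)))%N by lia.
have k_eq : (a + (k - a))%N = k by lia.
by rewrite b_eq !iotaD !count_cat k_eq /= Pk Pk1 Pk2 in few; lia.
Qed.

Lemma ler_sum_min (R : realDomainType) (I : finType) (F G : I -> R) :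
  \sum_i Num.min (F i) (G i) <= Num.min (\sum_i F i) (\sum_i G i).
Proof.
by rewrite le_min; apply/andP; split; apply: ler_sum => i _; rewrite ge_min lexx ?orbT.
Qed.

Section BayesRisk.
Variable R : realType.

Definition bayes_risk (V : chan R) (t : R) : R :=
  \sum_y Num.min ((1 - t) * tr V true y) (t * tr V false y).

Lemma bayes_risk_degr (W V : chan R) t : 0 <= t <= 1 -> degr W V ->
  bayes_risk V t <= bayes_risk W t.
Proof.
move=> /andP [t0 t1] [T [T_ge0 [T_sum1 TW]]].
have -> : bayes_risk V t =
    \sum_y' \sum_y T y y' * Num.min ((1 - t) * tr V true y) (t * tr V false y).
  by rewrite exchange_big; apply: eq_bigr => y _; rewrite -mulr_suml T_sum1 mul1r.
apply: ler_sum => y' _; rewrite !TW !mulr_sumr.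
apply: le_trans (ler_sum_min _ _); apply: ler_sum => y _.
by rewrite minr_pMr // !(mulrCA (T y y')) ![T y y' * _]mulrC.
Qed.

Lemma bsc_bayes_risk (p e t : R) : 0 <= p -> e + t <= 1 ->
  \sum_b Num.min ((1 - t) * (p * bsc e true b)) (t * (p * bsc e false b)) =
  p * Num.min e t.
Proof.
move=> p0 et; rewrite big_bool /bsc /= [(1 - t) * _]mulrCA [t * _]mulrCA.
rewrite [(1 - t) * _]mulrCA [t * _]mulrCA -!minr_pMr // -mulrDr; congr (_ * _).
have te_le : t * e <= (1 - t) * (1 - e) by nra.
rewrite (min_r te_le); case: (leP e t) => [e_le_t | t_lt_e].
  by rewrite min_l; [ring | nra].
by rewrite min_r; [ring | nra].
Qed.

Definition switch_pos (I : finType) (p eps : I -> R) : chan R :=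
  @switch R {i : I | 0 < p i} (fun i => p (val i)) (fun i => eps (val i)).

Lemma big_switch_pos (I : finType) (p eps : I -> R) (G : I -> bool -> R) :
  \sum_(y : out (switch_pos p eps)) G (val y.1) y.2 = \sum_(i | 0 < p i) \sum_b G i b.
Proof. by rewrite (big_sub [pred i | 0 < p i]) pair_bigA. Qed.

Lemma bayes_risk_switch_pos (I : finType) (p eps : I -> R) t :
  (forall i, 0 < p i -> eps i + t <= 1) ->
  bayes_risk (switch_pos p eps) t = \sum_(i | 0 < p i) p i * Num.min (eps i) t.
Proof.
move=> et; rewrite /bayes_risk (big_switch_pos p eps (fun i b =>
  Num.min ((1 - t) * (p i * bsc (eps i) true b)) (t * (p i * bsc (eps i) false b)))).
by apply: eq_bigr => i p_gt0; apply: bsc_bayes_risk; [exact: ltW | exact: et].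
Qed.

Lemma cong_switch_pos (I : finType) (p eps p' eps' : I -> R) :
  p =1 p' -> eps =1 eps' -> cong (switch_pos p eps) (switch_pos p' eps').
Proof.
move=> pE epsE e _; pose G (p eps : I -> R) i b :=
  if p i * bsc (eps i) false b * (1 - e) == p i * bsc (eps i) true b * e
  then (p i * bsc (eps i) false b + p i * bsc (eps i) true b) / 2 else 0.
rewrite /LRprofile [LHS]big_mkcond [RHS]big_mkcond (big_switch_pos p eps (G p eps)).
rewrite (big_switch_pos p' eps' (G p' eps')).
by apply: eq_big => [i | i _]; rewrite /G ?pE ?epsE.
Qed.

End BayesRisk.

Lemma DQ_switch_pos (R : realType) n m (q sigma : nat -> R) ii s :
  DQ n m q sigma ii s =
  switch_pos (fun j : 'I_n => DQp n m q ii s j.+1) (fun j => DQeps n m q sigma ii s j.+1).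
Proof. by []. Qed.

(* In the application [c] and [c'] are the breakpoints of W and W', and
   [atom u v] says that [[u, v]] is an atom of Q. *)
Section SplitPoints.
Variables (R : realType) (n : nat) (c c' : nat -> R) (atom : R -> R -> Prop).
Hypothesis c_incr : forall l, (1 <= l <= n)%N -> c l < c l.+1.
Hypothesis c_first : c 1%N = c' 1%N.
Hypothesis c_last : c n.+1 = c' n.+1.
Hypothesis inside_atom : forall l j, (1 <= l <= n.+1)%N -> (1 <= j <= n)%N ->
  c' j < c l < c' j.+1 -> atom (c' j) (c' j.+1).
Hypothesis atom_step : forall l u v, (1 <= l <= n)%N -> atom u v ->
  u <= c l -> c l.+1 <= v -> c l = u /\ c l.+1 = v.
Hypothesis no_three : forall k, (2 <= k)%N -> (k.+2 <= n)%N ->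
  c k != c' k -> c k.+1 != c' k.+1 -> c k.+2 = c' k.+2.

Lemma agree_next_le k : (1 <= k <= n)%N -> c k = c' k -> c' k.+1 <= c k.+1.
Proof.
move=> kn ck; rewrite leNgt; apply/negP => lt.
have kSn1 : (1 <= k.+1 <= n.+1)%N by lia.
have inside : c' k < c k.+1 < c' k.+1 by rewrite -ck c_incr.
have ck_le : c' k <= c k by rewrite ck.
have [_ e] := atom_step kn (inside_atom kSn1 kn inside) ck_le (ltW lt).
by rewrite e ltxx in lt.
Qed.

Lemma agree_prev_le k : (1 <= k <= n)%N -> c k.+1 = c' k.+1 -> c k <= c' k.
Proof.
move=> kn ck; rewrite leNgt; apply/negP => lt.
have kn1 : (1 <= k <= n.+1)%N by lia.
have inside : c' k < c k < c' k.+1 by rewrite lt -ck c_incr.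
have ck_le : c k.+1 <= c' k.+1 by rewrite ck.
have [e _] := atom_step kn (inside_atom kn1 kn inside) (ltW lt) ck_le.
by rewrite e ltxx in lt.
Qed.

Lemma lt_next k : (1 <= k <= n)%N -> c' k < c k -> c' k.+1 < c k.+1.
Proof.
move=> kn lt; rewrite ltNge; apply/negP => le.
have kn1 : (1 <= k <= n.+1)%N by lia.
have inside : c' k < c k < c' k.+1 by rewrite lt (lt_le_trans (c_incr kn) le).
have [e _] := atom_step kn (inside_atom kn1 kn inside) (ltW lt) le.
by rewrite e ltxx in lt.
Qed.

Lemma split_points_agree l : (1 <= l <= n.+1)%N -> c l = c' l.
Proof.
move=> ln; apply/eqP; apply/negPn/negP => ne.
have ex : exists k, (1 <= k <= n.+1)%N && (c k != c' k) by exists l; rewrite ln ne.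
case: (ex_minnP ex) => k /andP [kn ck] k_min.
have k_ne1 : k != 1%N by apply: contraNneq ck => ->; rewrite c_first.
have k_neSn : k != n.+1 by apply: contraNneq ck => ->; rewrite c_last.
have prev : c k.-1 = c' k.-1.
  apply/eqP; apply/negPn/negP => ne'.
  have := k_min k.-1; rewrite ne' andbT; lia.
have lt : c' k < c k.
  have := agree_next_le (k := k.-1) ltac:(lia) prev; rewrite prednK; last by lia.
  by rewrite le_eqVlt eq_sym (negbTE ck).
have ltS := lt_next (k := k) ltac:(lia) lt.
have k_lt_n : (k < n)%N.
  rewrite ltnNge; apply: contraTN ltS => n_le_k.
  have kSn : k.+1 = n.+1 by lia.
  by rewrite kSn c_last ltxx.
have next2 : c k.+2 = c' k.+2.
  have [-> // | kn2] := eqVneq k.+2 n.+1.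
  by apply: no_three; rewrite ?ck ?gt_eqF //; lia.
by have := agree_prev_le (k := k.+1) ltac:(lia) next2; rewrite leNgt ltS.
Qed.

End SplitPoints.

Section MassCurve.
Variables (R : realType) (m : nat) (q sigma : nat -> R).
Hypothesis m_gt0 : (0 < m)%N.
Hypothesis q_gt0 : forall i, (1 <= i <= m)%N -> 0 < q i.
Hypothesis q_sum1 : \sum_(i < m) q i.+1 = 1.
Hypothesis sigma_incr : forall i, (1 <= i < m)%N -> sigma i < sigma i.+1.

Definition qmass (i : nat) : R := \sum_(0 <= l < i.+1) qe m q l.
Definition qerr (i : nat) : R := \sum_(0 <= l < i.+1) qe m q l * sigma l.
Definition qslice (x : R) (k : nat) : R := Num.min x (qmass k.+1) - Num.min x (qmass k).

(* [qcurve] is the convex piecewise-linear function with slope [sigma a] on the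
   a-th atom [[qmass a.-1, qmass a]] of Q.  The j-th component of D_Q has mass
   [bp j.+1 - bp j] and error mass [qcurve (bp j.+1) - qcurve (bp j)]. *)
Definition qcurve (x : R) : R := \sum_(0 <= k < m) sigma k.+1 * qslice x k.

Lemma qe_ge0 i : 0 <= qe m q i.
Proof. by rewrite /qe; case: ifP => // /q_gt0 /ltW. Qed.

Lemma qe_gt0 i : (1 <= i <= m)%N -> 0 < qe m q i.
Proof. by move=> im; rewrite /qe im q_gt0. Qed.

Lemma qe0 : qe m q 0 = 0.
Proof. by []. Qed.

Lemma qe_out : qe m q m.+1 = 0.
Proof. by rewrite /qe ltnn andbF. Qed.

Lemma qmass0 : qmass 0 = 0.
Proof. by rewrite /qmass big_nat1. Qed.

Lemma qmassS i : qmass i.+1 = qmass i + qe m q i.+1.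
Proof. by rewrite /qmass big_nat_recr. Qed.

Lemma qmass_pred i : qmass i.-1 = qmass i - qe m q i.
Proof. by case: i => [|i]; rewrite ?qmass0 ?qmassS /= ?subr0 ?addrK. Qed.

Lemma le_qmass i j : (i <= j)%N -> qmass i <= qmass j.
Proof.
apply: (homo_leq (f := qmass) (r := fun x y => x <= y)) => [x | y x z | k].
- exact: lexx.
- exact: le_trans.
- by rewrite qmassS lerDl qe_ge0.
Qed.

Lemma qmass_ltn i j : qmass i < qmass j -> (i < j)%N.
Proof. by apply: contraLR; rewrite -leqNgt -leNgt => /le_qmass. Qed.

Lemma lt_qmass i j : (i < j)%N -> (j <= m)%N -> qmass i < qmass j.
Proof.
case: j => // j; rewrite ltnS => ij jm; rewrite qmassS.
by apply: le_lt_trans (le_qmass ij) _; rewrite ltrDl qe_gt0.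
Qed.

Lemma qmass_m : qmass m = 1.
Proof.
rewrite /qmass big_ltn // qe0 add0r big_add1 /= -q_sum1 big_mkord.
by apply: eq_bigr => i _; rewrite /qe ltn_ord.
Qed.

Lemma qmass_Sm : qmass m.+1 = 1.
Proof. by rewrite qmassS qe_out qmass_m addr0. Qed.

Lemma qmass_ge0 i : 0 <= qmass i.
Proof. by rewrite -qmass0 le_qmass. Qed.

Lemma qmass_le1 i : (i <= m.+1)%N -> qmass i <= 1.
Proof. by rewrite -qmass_Sm => /le_qmass. Qed.

Lemma le_sigma i j : (1 <= i)%N -> (i <= j <= m)%N -> sigma i <= sigma j.
Proof. exact: le_of_lt_steps. Qed.

Lemma qslice_full x k : qmass k.+1 <= x -> qslice x k = qe m q k.+1.
Proof.
move=> kx; have := le_qmass (leqnSn k) => kk.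
by rewrite /qslice !min_r ?(le_trans kk) // qmassS addrAC subrr add0r.
Qed.

Lemma qslice_empty x k : x <= qmass k -> qslice x k = 0.
Proof.
move=> xk; have := le_qmass (leqnSn k) => kk.
by rewrite /qslice !min_l ?(le_trans xk) ?subrr.
Qed.

Lemma qslice_part x k : qmass k <= x <= qmass k.+1 -> qslice x k = x - qmass k.
Proof. by case/andP => kx xk; rewrite /qslice (min_l xk) (min_r kx). Qed.

Lemma qslice_le x y k : x <= y -> qslice x k <= qslice y k.
Proof.
rewrite /qslice => xy; have := le_qmass (leqnSn k).
by case: (leP x (qmass k)); case: (leP x (qmass k.+1));
   case: (leP y (qmass k)); case: (leP y (qmass k.+1)); lra.
Qed.

Lemma qslice_sum x : 0 <= x <= 1 -> \sum_(0 <= k < m) qslice x k = x.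
Proof.
case/andP => x0 x1; rewrite telescope_sumr // qmass_m qmass0.
by rewrite (min_l x1) (min_r x0) subr0.
Qed.

Lemma qcurve0 : qcurve 0 = 0.
Proof. by rewrite /qcurve big1 // => k _; rewrite qslice_empty ?mulr0 ?qmass_ge0. Qed.

Lemma qcurve_sub_chord c x y : 0 <= x <= 1 -> 0 <= y <= 1 ->
  qcurve y - qcurve x - c * (y - x) =
  \sum_(0 <= k < m) (sigma k.+1 - c) * (qslice y k - qslice x k).
Proof.
move=> x01 y01.
have -> : c * (y - x) = \sum_(0 <= k < m) c * (qslice y k - qslice x k).
  by rewrite -mulr_sumr sumrB !qslice_sum.
by rewrite /qcurve -!sumrB; apply: eq_bigr => k _; ring.
Qed.

Lemma qcurve_diff_le c x y : 0 <= x <= y -> y <= 1 ->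
  (forall k, (k < m)%N -> qslice x k != qslice y k -> sigma k.+1 <= c) ->
  qcurve y - qcurve x <= c * (y - x).
Proof.
move=> /andP [x0 xy] y1 sigma_le.
have x01 : 0 <= x <= 1 by rewrite x0 (le_trans xy y1).
have y01 : 0 <= y <= 1 by rewrite (le_trans x0 xy) y1.
rewrite -subr_le0 (qcurve_sub_chord c x01 y01) big_nat; apply: sumr_le0 => k /andP [_ km].
have [-> | ne] := eqVneq (qslice x k) (qslice y k); first by rewrite subrr mulr0.
by rewrite mulr_le0_ge0 ?subr_le0 ?subr_ge0 ?qslice_le ?sigma_le.
Qed.

Lemma qcurve_diff_ge c x y : 0 <= x <= y -> y <= 1 ->
  (forall k, (k < m)%N -> qslice x k != qslice y k -> c <= sigma k.+1) ->
  c * (y - x) <= qcurve y - qcurve x.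
Proof.
move=> /andP [x0 xy] y1 sigma_ge.
have x01 : 0 <= x <= 1 by rewrite x0 (le_trans xy y1).
have y01 : 0 <= y <= 1 by rewrite (le_trans x0 xy) y1.
rewrite -subr_ge0 (qcurve_sub_chord c x01 y01) big_nat; apply: sumr_ge0 => k /andP [_ km].
have [-> | ne] := eqVneq (qslice x k) (qslice y k); first by rewrite subrr mulr0.
by rewrite mulr_ge0 ?subr_ge0 ?qslice_le ?sigma_ge.
Qed.

Lemma qcurve_slope_le x y a : 0 <= x <= y -> y <= qmass a -> (1 <= a <= m)%N ->
  qcurve y - qcurve x <= sigma a * (y - x).
Proof.
move=> /andP [x0 xy] ya /andP [a1 am].
apply: qcurve_diff_le => [||k km]; first by rewrite x0 xy.
  by rewrite (le_trans ya) // qmass_le1 // ltnW.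
case: (ltnP k a) => [ka _ | ak]; first by apply: le_sigma => //; rewrite ka am.
have yk : y <= qmass k := le_trans ya (le_qmass ak).
by rewrite !qslice_empty ?eqxx // (le_trans xy).
Qed.

Lemma qcurve_slope_ge y z a : qmass a.-1 <= y <= z -> z <= 1 -> (1 <= a <= m)%N ->
  sigma a * (z - y) <= qcurve z - qcurve y.
Proof.
move=> /andP [ay yz] z1 /andP [a1 am].
apply: qcurve_diff_ge => [|//|k km]; first by rewrite yz (le_trans (qmass_ge0 _) ay).
case: (ltnP k.+1 a) => [ka | ak _]; last by apply: le_sigma => //; rewrite ak km.
have ky : qmass k.+1 <= y by apply: le_trans ay; apply: le_qmass; rewrite -ltnS prednK.
by rewrite !qslice_full ?eqxx // (le_trans ky).
Qed.

Lemma qcurve_slope_lt x y a : 0 <= x < qmass a.-1 -> qmass a.-1 < y <= qmass a ->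
  (1 <= a <= m)%N -> qcurve y - qcurve x < sigma a * (y - x).
Proof.
move=> /andP [x0 xa] /andP [ay ya] /andP [a1 am].
have a2 : (1 < a)%N.
  case: (ltnP 1 a) => // a_le1; have a_eq : a = 1%N by lia.
  by rewrite a_eq qmass0 in xa; lra.
have sigma_lt : sigma a.-1 < sigma a.
  by have := sigma_incr (i := a.-1); rewrite prednK ?(ltnW a2) //; apply; lia.
have up : qcurve y - qcurve (qmass a.-1) <= sigma a * (y - qmass a.-1).
  by apply: qcurve_slope_le; rewrite ?qmass_ge0 ?(ltW ay) ?a1.
have lo : qcurve (qmass a.-1) - qcurve x <= sigma a.-1 * (qmass a.-1 - x).
  by apply: qcurve_slope_le; rewrite ?x0 ?(ltW xa) //; lia.
have : sigma a.-1 * (qmass a.-1 - x) < sigma a * (qmass a.-1 - x).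
  by rewrite ltr_pM2r ?subr_gt0.
lra.
Qed.

Lemma qcurve_slope_gt y z a : qmass a.-1 <= y <= qmass a -> qmass a < z <= 1 ->
  (1 <= a <= m)%N -> sigma a * (z - y) < qcurve z - qcurve y.
Proof.
move=> /andP [ay ya] /andP [az z1] /andP [a1 am].
have a_lt_m : (a < m)%N.
  rewrite ltn_neqAle am andbT; apply/eqP => a_eq.
  by rewrite a_eq qmass_m in az; lra.
have sigma_lt : sigma a < sigma a.+1 by apply: sigma_incr; rewrite a1.
have lo : sigma a * (qmass a - y) <= qcurve (qmass a) - qcurve y.
  by apply: qcurve_slope_ge; rewrite ?ay ?ya ?qmass_le1 ?a1 //; lia.
have hi : sigma a.+1 * (z - qmass a) <= qcurve z - qcurve (qmass a).
  by apply: qcurve_slope_ge; rewrite ?lexx ?(ltW az) //; lia.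
have : sigma a * (z - qmass a) < sigma a.+1 * (z - qmass a).
  by rewrite ltr_pM2r ?subr_gt0.
lra.
Qed.

Lemma qmass_atom y : 0 < y <= 1 ->
  exists2 a, (1 <= a <= m)%N & qmass a.-1 < y <= qmass a.
Proof.
case/andP => y0 y1.
have ex : exists a, y <= qmass a by exists m; rewrite qmass_m.
case: (ex_minnP ex) => a ya a_min.
have a1 : (1 <= a)%N by case: a ya {a_min} => [|//]; rewrite qmass0 => y_le0; lra.
exists a; first by rewrite a1 a_min // qmass_m.
by rewrite ya andbT ltNge; apply/negP => /a_min; lia.
Qed.

Lemma qcurve_chord_in_atom x y z t : 0 <= x -> x < y < z -> z <= 1 ->
  t * (y - x) <= qcurve y - qcurve x -> qcurve z - qcurve y <= t * (z - y) ->
  exists a, qmass a.-1 <= x /\ z <= qmass a.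
Proof.
move=> x0 /andP [xy yz] z1 left right.
have y01 : 0 < y <= 1 by rewrite (le_lt_trans x0 xy) (ltW (lt_le_trans yz z1)).
have [a am /andP [ay ya]] := qmass_atom y01.
have yx : 0 < y - x by rewrite subr_gt0.
have zy : 0 < z - y by rewrite subr_gt0.
exists a; split; rewrite leNgt; apply/negP.
- move=> xa.
  have steep : qcurve y - qcurve x < sigma a * (y - x).
    by apply: qcurve_slope_lt; rewrite ?x0 ?xa ?ay ?ya.
  have flat : sigma a * (z - y) <= qcurve z - qcurve y.
    by apply: qcurve_slope_ge; rewrite ?(ltW ay) ?(ltW yz).
  have : t < sigma a by rewrite -(ltr_pM2r yx); lra.
  have : sigma a <= t by rewrite -(ler_pM2r zy); lra.
  lra.
- move=> az.
  have steep : sigma a * (z - y) < qcurve z - qcurve y.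
    by apply: qcurve_slope_gt; rewrite ?(ltW ay) ?ya ?az.
  have flat : qcurve y - qcurve x <= sigma a * (y - x).
    by apply: qcurve_slope_le; rewrite ?x0 ?(ltW xy).
  have : sigma a < t by rewrite -(ltr_pM2r zy); lra.
  have : t <= sigma a by rewrite -(ler_pM2r yx); lra.
  lra.
Qed.

Lemma qerrS i : qerr i.+1 = qerr i + qe m q i.+1 * sigma i.+1.
Proof. by rewrite /qerr big_nat_recr. Qed.

Lemma qcurve_affine j x : (j < m)%N -> qmass j <= x <= qmass j.+1 ->
  qcurve x = qerr j + sigma j.+1 * (x - qmass j).
Proof.
move=> jm /andP [jx xj].
rewrite /qcurve (big_cat_nat (n := j)) ?(ltnW jm) //= (big_ltn jm) qslice_part ?jx ?xj //.
have -> : \sum_(j.+1 <= k < m) sigma k.+1 * qslice x k = 0.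
  rewrite big_nat big1 // => k /andP [jk _].
  by rewrite qslice_empty ?mulr0 // (le_trans xj) ?le_qmass.
have -> : \sum_(0 <= k < j) sigma k.+1 * qslice x k = qerr j.
  rewrite /qerr big_nat_recl // qe0 mul0r add0r !big_nat; apply: eq_bigr => k /andP [_ kj].
  by rewrite qslice_full 1?mulrC // (le_trans _ jx) ?le_qmass.
by rewrite addr0.
Qed.

Lemma qcurve_qmass_sub i s : (i <= m.+1)%N -> 0 <= s <= qe m q i ->
  qcurve (qmass i - s) = qerr i - s * sigma i.
Proof.
have inner j t : (j < m)%N -> 0 <= t <= qe m q j.+1 ->
    qcurve (qmass j.+1 - t) = qerr j.+1 - t * sigma j.+1.
  move=> jm /andP [t0 tq].
  rewrite (qcurve_affine jm); first by rewrite qerrS qmassS; ring.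
  by rewrite qmassS; apply/andP; split; lra.
case: i => [|i] im /andP [s0 sq].
  have -> : s = 0 by rewrite qe0 in sq; lra.
  by rewrite qmass0 /qerr big_nat1 qe0 !mul0r !subr0 qcurve0.
case: (ltnP i m) => [i_lt_m | m_le_i]; first by apply: inner; rewrite ?s0 ?sq.
have i_eq : i = m by lia.
rewrite i_eq qe_out in sq *; have -> : s = 0 by lra.
rewrite mul0r !subr0 qmassS qerrS qe_out mul0r !addr0.
have := inner m.-1 0; rewrite mul0r !subr0 prednK //.
by apply; rewrite ?lexx ?qe_ge0.
Qed.

(* The last hypothesis is condition (iii) of a 2n-P*-degradation. *)
Lemma qmass_step_spans_atom i b u v :
  (i < b <= m.+1)%N -> 0 <= u <= qe m q i -> 0 <= v <= qe m q b ->
  qmass i - u < qmass b - v ->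
  (b = i.+1 -> (u = 0 -> v = 0) /\ (v = qe m q b -> u = qe m q i)) ->
  (exists k, [/\ qmass i - u <= qmass k.-1, qmass k.-1 < qmass k & qmass k <= qmass b - v])
  \/ exists k, qmass i - u < qmass k < qmass b - v.
Proof.
move=> /andP [ib bm] /andP [u0 uq] /andP [v0 vq] step adj.
have b_pred := qmass_pred b.
case: (ltnP i.+1 b) => [iSb | bi].
  left; exists i.+1; split => /=; first lra.
    by apply: lt_qmass; lia.
  by apply: le_trans (le_qmass (_ : i.+1 <= b.-1)%N) _; [lia | lra].
have b_eq : b = i.+1 by lia.
have [uv0 vu_full] := adj b_eq.
have qmass_i : qmass i = qmass b - qe m q b by rewrite -qmass_pred b_eq.
have [u0' | u_gt0] := eqVneq u 0.
  left; exists b; rewrite u0' (uv0 u0') !subr0 in step *.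
  by rewrite b_eq /=; split; rewrite ?lexx // -b_eq.
have [vq' | v_lt] := eqVneq v (qe m q b).
  left; exists i; rewrite (vu_full vq') -qmass_pred vq' -qmass_i in step *.
  by split; rewrite ?lexx.
right; exists i; apply/andP; split.
  by rewrite ltrBlDr ltrDl lt0r u_gt0.
by rewrite qmass_i ltrD2l ltrN2 lt_neqAle v_lt.
Qed.

Lemma qmass_step_in_atom i b u v a :
  (i < b <= m.+1)%N -> 0 <= u <= qe m q i -> 0 <= v <= qe m q b ->
  qmass i - u < qmass b - v ->
  (b = i.+1 -> (u = 0 -> v = 0) /\ (v = qe m q b -> u = qe m q i)) ->
  qmass a.-1 <= qmass i - u -> qmass b - v <= qmass a ->
  qmass i - u = qmass a.-1 /\ qmass b - v = qmass a.
Proof.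
move=> ib uq vq step adj lo hi.
case: (qmass_step_spans_atom ib uq vq step adj) => [[k [uk kk kv]] | [k /andP [uk kv]]].
  have k_le_a := qmass_ltn (lt_le_trans kk (le_trans kv hi)).
  have a_le_k := qmass_ltn (le_lt_trans (le_trans lo uk) kk).
  have a_eq : a = k by lia.
  by subst a; split; apply: le_anti; rewrite ?uk ?lo ?kv ?hi.
have := qmass_ltn (le_lt_trans lo uk); have := qmass_ltn (lt_le_trans kv hi).
by move=> ka ak; exfalso; lia.
Qed.

Section Breakpoints.
Variables (n : nat) (ii : nat -> nat) (s : nat -> R).
Hypothesis n_gt0 : (0 < n)%N.
Hypothesis ok : pattern_ok n m q ii s.
Hypothesis star : isPstar n m q sigma ii s.

(* [bp j] = p_1 + ... + p_{j-1}: D_Q splits the mass axis [0, 1] at these points. *)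
Definition bp (j : nat) : R := qmass (ie n m ii j) - se n s j.

Lemma ie_first : ie n m ii 1 = 0%N.
Proof. by rewrite /ie eqxx. Qed.

Lemma ie_last : ie n m ii n.+1 = m.+1.
Proof. by rewrite /ie eqSS (gtn_eqF n_gt0) eqxx. Qed.

Lemma ie_mid j : (2 <= j <= n)%N -> ie n m ii j = ii j.
Proof. by move=> jn; rewrite /ie; case: eqP => [j1 | _]; [lia | case: eqP => // jn1; lia]. Qed.

Lemma se_first : se n s 1 = 0.
Proof. by rewrite /se eqxx. Qed.

Lemma se_last : se n s n.+1 = 0.
Proof. by rewrite /se eqxx orbT. Qed.

Lemma se_mid j : (2 <= j <= n)%N -> se n s j = s j.
Proof. by move=> jn; rewrite /se; case: eqP => [j1 | _]; [lia | case: eqP => // jn1; lia]. Qed.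

Lemma ie_mid_bounds j : (2 <= j <= n)%N -> (1 <= ie n m ii j <= m)%N.
Proof. by case: ok => ii_range _ jn; rewrite ie_mid // ii_range. Qed.

Lemma ie_lt j : (1 <= j <= n)%N -> (ie n m ii j < ie n m ii j.+1)%N.
Proof.
case: ok => _ [ii_incr _] jn.
have [-> | j_ne1] := eqVneq j 1%N.
  rewrite ie_first; have [n1 | n_ne1] := eqVneq n 1%N.
    by have := ie_last; rewrite n1 => ->.
  by have := ie_mid_bounds (j := 2); lia.
have [-> | j_ne_n] := eqVneq j n.
  by rewrite ie_last; have := ie_mid_bounds (j := n); lia.
by rewrite !ie_mid ?ii_incr //; lia.
Qed.

Lemma ie_le j : (1 <= j <= n.+1)%N -> (ie n m ii j <= m.+1)%N.
Proof.
move=> jn; have [-> | j_ne1] := eqVneq j 1%N; first by rewrite ie_first.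
have [-> | j_ne] := eqVneq j n.+1; first by rewrite ie_last.
by have := ie_mid_bounds (j := j); lia.
Qed.

Lemma se_bounds j : (1 <= j <= n.+1)%N -> 0 <= se n s j <= qe m q (ie n m ii j).
Proof.
case: ok => ii_range [_ s_range] jn.
have [-> | j_ne1] := eqVneq j 1%N; first by rewrite se_first ie_first qe0 lexx.
have [-> | j_ne] := eqVneq j n.+1; first by rewrite se_last ie_last qe_out lexx.
have jn' : (2 <= j <= n)%N by lia.
by rewrite se_mid // ie_mid // /qe ii_range // s_range.
Qed.

Lemma bp_bounds j : (1 <= j <= n.+1)%N ->
  qmass (ie n m ii j).-1 <= bp j <= qmass (ie n m ii j).
Proof.
by move/se_bounds; rewrite /bp qmass_pred => /andP [s0 sq]; apply/andP; split; lra.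
Qed.

Lemma bp_unit j : (1 <= j <= n.+1)%N -> 0 <= bp j <= 1.
Proof.
move=> jn; have /andP [lo hi] := bp_bounds jn.
by rewrite (le_trans (qmass_ge0 _) lo) (le_trans hi (qmass_le1 (ie_le jn))).
Qed.

Lemma bp_first : bp 1 = 0.
Proof. by rewrite /bp ie_first se_first qmass0 subr0. Qed.

Lemma bp_last : bp n.+1 = 1.
Proof. by rewrite /bp ie_last se_last qmass_Sm subr0. Qed.

Lemma DQp_bp j : (1 <= j <= n)%N -> DQp n m q ii s j = bp j.+1 - bp j.
Proof.
move=> jn; have := big_nat_prefix_split (qe m q) (ie_lt jn).
by rewrite /DQp /bp /qmass; lra.
Qed.

Lemma DQpe_bp j : (1 <= j <= n)%N ->
  DQpe n m q sigma ii s j = qcurve (bp j.+1) - qcurve (bp j).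
Proof.
move=> jn; have jn1 : (1 <= j <= n.+1)%N by lia.
have jSn1 : (1 <= j.+1 <= n.+1)%N by lia.
rewrite /bp !qcurve_qmass_sub ?ie_le ?se_bounds //.
have := big_nat_prefix_split (fun l => qe m q l * sigma l) (ie_lt jn).
by rewrite /DQpe /qerr; lra.
Qed.

Lemma DQp_gt0 j : (1 <= j <= n)%N -> 0 < DQp n m q ii s j.
Proof. by case: star => [[p_gt0 _] _] /p_gt0. Qed.

Lemma bp_lt j : (1 <= j <= n)%N -> bp j < bp j.+1.
Proof. by move=> jn; have := DQp_gt0 jn; rewrite DQp_bp // subr_gt0. Qed.

Lemma le_eps i j : (1 <= i)%N -> (i <= j <= n)%N ->
  DQeps n m q sigma ii s i <= DQeps n m q sigma ii s j.
Proof. by case: star => [[_ [_ [eps_incr _]]] _]; apply: le_of_lt_steps. Qed.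

Lemma eps_bounds j : (1 <= j <= n)%N -> 0 <= DQeps n m q sigma ii s j <= 1 / 2.
Proof.
case: star => [[_ [eps1 [_ eps_n]]] _] /andP [j1 jn].
have lo : DQeps n m q sigma ii s 1 <= DQeps n m q sigma ii s j.
  by apply: le_eps; rewrite ?j1 ?jn.
have hi : DQeps n m q sigma ii s j <= DQeps n m q sigma ii s n.
  by apply: le_eps; rewrite ?j1 ?jn ?leqnn.
by rewrite (le_trans eps1 lo) (le_trans hi eps_n).
Qed.

Lemma qcurve_bp_step j : (1 <= j <= n)%N ->
  qcurve (bp j.+1) - qcurve (bp j) = DQeps n m q sigma ii s j * (bp j.+1 - bp j).
Proof. by move=> jn; rewrite -DQpe_bp // -DQp_bp // /DQeps divfK ?lt0r_neq0 ?DQp_gt0. Qed.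

Lemma bp_step_in_atom l a : (1 <= l <= n)%N ->
  qmass a.-1 <= bp l -> bp l.+1 <= qmass a -> bp l = qmass a.-1 /\ bp l.+1 = qmass a.
Proof.
move=> ln lo hi; case: star => [_ [_ adj]].
apply: (qmass_step_in_atom _ _ _ (bp_lt ln) (adj l ln) lo hi).
- by rewrite ie_lt // ie_le //; lia.
- by apply: se_bounds; lia.
- by apply: se_bounds; lia.
Qed.

Lemma bayes_risk_DQ t : 0 <= t <= 1 / 2 ->
  bayes_risk (DQ n m q sigma ii s) t =
  \sum_(1 <= j < n.+1) DQp n m q ii s j * Num.min (DQeps n m q sigma ii s j) t.
Proof.
move=> /andP [t0 t_half]; rewrite DQ_switch_pos bayes_risk_switch_pos => [|j _].
  rewrite big_add1 /= big_mkord; apply: eq_bigl => j.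
  by rewrite DQp_gt0 //; have := ltn_ord j; lia.
have /andP [_ eps_half] : 0 <= DQeps n m q sigma ii s j.+1 <= 1 / 2.
  by apply: eps_bounds; have := ltn_ord j; lia.
lra.
Qed.

Lemma sum_DQp_eps l : (1 <= l <= n.+1)%N ->
  \sum_(1 <= j < l) DQp n m q ii s j * DQeps n m q sigma ii s j = qcurve (bp l).
Proof.
case/andP => l1 ln.
have -> : qcurve (bp l) = qcurve (bp l) - qcurve (bp 1) by rewrite bp_first qcurve0 subr0.
rewrite -(telescope_sumr (fun j => qcurve (bp j)) l1) !big_nat.
by apply: eq_bigr => j /andP [j1 jl]; rewrite qcurve_bp_step ?DQp_bp 1?mulrC //; lia.
Qed.

Lemma sum_DQp l t : (1 <= l <= n.+1)%N ->
  \sum_(l <= j < n.+1) DQp n m q ii s j * t = t * (1 - bp l).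
Proof.
case/andP => l1 ln; rewrite -bp_last -(telescope_sumr bp ln) mulr_sumr !big_nat.
by apply: eq_bigr => j /andP [lj jn]; rewrite DQp_bp 1?mulrC //; lia.
Qed.

Lemma bayes_risk_DQ_le l t : (1 <= l <= n.+1)%N -> 0 <= t <= 1 / 2 ->
  bayes_risk (DQ n m q sigma ii s) t <= qcurve (bp l) + t * (1 - bp l).
Proof.
move=> ln t_range; have /andP [l1 l_le] := ln.
rewrite bayes_risk_DQ // (big_cat_nat (n := l)) //= -sum_DQp_eps // -(sum_DQp t ln).
apply: lerD; apply: ler_sum_nat => j /andP [lj jn]; rewrite ler_wpM2l ?ge_min ?lexx ?orbT //.
- by rewrite ltW // DQp_gt0 //; lia.
- by rewrite ltW // DQp_gt0 //; lia.
Qed.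

Lemma bayes_risk_DQ_eps j : (1 <= j <= n)%N ->
  bayes_risk (DQ n m q sigma ii s) (DQeps n m q sigma ii s j) =
  qcurve (bp j.+1) + DQeps n m q sigma ii s j * (1 - bp j.+1).
Proof.
move=> jn; have jSn1 : (1 <= j.+1 <= n.+1)%N by lia.
rewrite bayes_risk_DQ ?eps_bounds // (big_cat_nat (n := j.+1)) //=; try lia.
rewrite -sum_DQp_eps // -(sum_DQp _ jSn1); congr (_ + _); rewrite !big_nat.
  by apply: eq_bigr => i /andP [i1 ij]; rewrite min_l // le_eps //; lia.
by apply: eq_bigr => i /andP [ji in1]; rewrite min_r // le_eps //; lia.
Qed.

Lemma bp_mid j : (2 <= j <= n)%N -> bp j = qmass (ii j) - s j.
Proof. by move=> jn; rewrite /bp ie_mid ?se_mid. Qed.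

End Breakpoints.

Section Upgrade.
Variables (n : nat) (ii ii' : nat -> nat) (s s' : nat -> R).
Hypothesis n_gt0 : (0 < n)%N.
Hypotheses (ok : pattern_ok n m q ii s) (ok' : pattern_ok n m q ii' s').
Hypotheses (star : isPstar n m q sigma ii s) (star' : isPstar n m q sigma ii' s').
Hypothesis degraded : degr (DQ n m q sigma ii s) (DQ n m q sigma ii' s').

(* At t = eps'_j the risk comparison makes the chord slope of [qcurve] at least
   t on [bp' j, bp l] and at most t on [bp l, bp' j.+1], whereas their union has
   slope exactly t; convexity then confines [bp' j, bp' j.+1] to one atom of Q. *)
Lemma bp_inside_step l j : (1 <= l <= n.+1)%N -> (1 <= j <= n)%N ->
  bp n ii' s' j < bp n ii s l < bp n ii' s' j.+1 ->
  exists a, bp n ii' s' j = qmass a.-1 /\ bp n ii' s' j.+1 = qmass a.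
Proof.
move=> ln jn inside.
have jn1 : (1 <= j <= n.+1)%N by lia.
have jSn1 : (1 <= j.+1 <= n.+1)%N by lia.
set t := DQeps n m q sigma ii' s' j.
have t_range : 0 <= t <= 1 / 2 := eps_bounds star' jn.
have t_unit : 0 <= t <= 1 by case/andP: t_range => t0 t_half; rewrite t0 /=; lra.
have risk_W' := bayes_risk_DQ_eps n_gt0 ok' star' jn.
have risk_W := bayes_risk_DQ_le n_gt0 ok star ln t_range.
have risk_le := bayes_risk_degr t_unit degraded.
have step := qcurve_bp_step n_gt0 ok' star' jn.
rewrite -/t in risk_W' step.
have /andP [x0 _] := bp_unit n_gt0 ok' jn1.
have /andP [_ z1] := bp_unit n_gt0 ok' jSn1.
have left : t * (bp n ii s l - bp n ii' s' j) <=
    qcurve (bp n ii s l) - qcurve (bp n ii' s' j) by lra.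
have right : qcurve (bp n ii' s' j.+1) - qcurve (bp n ii s l) <=
    t * (bp n ii' s' j.+1 - bp n ii s l) by lra.
have [a [lo hi]] := qcurve_chord_in_atom x0 inside z1 left right.
by exists a; exact: (bp_step_in_atom n_gt0 ok' star' jn lo hi).
Qed.

Lemma bp_agree :
  (count (fun j => (ii j != ii' j) || (s j != s' j)) (iota 2 n.-1) <= 2)%N ->
  forall l, (1 <= l <= n.+1)%N -> bp n ii s l = bp n ii' s' l.
Proof.
move=> few.
apply: (split_points_agree (atom := fun u v => exists a, u = qmass a.-1 /\ v = qmass a)).
- exact: (bp_lt n_gt0 ok star).
- by rewrite !bp_first.
- by rewrite !bp_last.
- exact: bp_inside_step.
- by move=> l u v ln [a [-> ->]]; exact: (bp_step_in_atom n_gt0 ok star ln).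
move=> k k2 kn ne ne1; apply/eqP; apply/negP => ne2.
have pattern_diff j : (2 <= j <= n)%N -> bp n ii s j != bp n ii' s' j ->
    (ii j != ii' j) || (s j != s' j).
  move=> jn; rewrite !bp_mid //; apply: contraLR; rewrite negb_or !negbK.
  by case/andP => /eqP -> /eqP ->.
have k_range : (k.+3 <= 2 + n.-1)%N by lia.
by apply: (count_iota_no_three few k2 k_range); apply: pattern_diff => //; lia.
Qed.

Lemma DQ_params_agree j : (1 <= j <= n)%N ->
  (forall l, (1 <= l <= n.+1)%N -> bp n ii s l = bp n ii' s' l) ->
  DQp n m q ii s j = DQp n m q ii' s' j /\
  DQeps n m q sigma ii s j = DQeps n m q sigma ii' s' j.
Proof.
move=> jn bp_eq; have p_eq : DQp n m q ii s j = DQp n m q ii' s' j.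
  by rewrite (DQp_bp n_gt0 ok) ?(DQp_bp n_gt0 ok') ?bp_eq //; lia.
split; rewrite /DQeps p_eq ?(DQpe_bp n_gt0 ok) ?(DQpe_bp n_gt0 ok') ?bp_eq //; lia.
Qed.

End Upgrade.

End MassCurve.

Theorem theorem4 (R : realType) (n m : nat) (q sigma : nat -> R)
  (ii ii' : nat -> nat) (s s' : nat -> R) :
  (2 <= n)%N -> (n < m)%N ->
  (forall i, (1 <= i <= m)%N -> 0 < q i) ->
  \sum_(i < m) q i.+1 = 1 ->
  0 <= sigma 1%N ->
  (forall i, (1 <= i < m)%N -> sigma i < sigma i.+1) ->
  sigma m <= 1 / 2 ->
  inBstar m (Qchan m q sigma) ->
  pattern_ok n m q ii s -> pattern_ok n m q ii' s' ->
  isPstar n m q sigma ii s -> isPstar n m q sigma ii' s' ->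
  (count (fun j => (ii j != ii' j) || (s j != s' j)) (iota 2 n.-1) <= 2)%N ->
  degr (DQ n m q sigma ii s) (DQ n m q sigma ii' s') ->
  cong (DQ n m q sigma ii s) (DQ n m q sigma ii' s').
Proof.
move=> n_ge2 n_lt_m q_gt0 q_sum1 _ sigma_incr _ _ ok ok' star star' few degraded.
have m_gt0 : (0 < m)%N by lia.
have n_gt0 : (0 < n)%N by lia.
have bp_eq := bp_agree m_gt0 q_gt0 q_sum1 sigma_incr n_gt0 ok ok' star star' degraded few.
rewrite !DQ_switch_pos; apply: cong_switch_pos => j;
  have jn : (1 <= j.+1 <= n)%N := ltn_ord j;
  by have [] := DQ_params_agree sigma m_gt0 q_gt0 n_gt0 ok ok' jn bp_eq.
Qed.
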